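(* Fix an integer $k\ge2$ and, for each integer $n>k$, an arbitrary $\xi(k;n)\in(0,1)$ with $P_{n,k}(\xi(k;n))=Q_{n,k}(\xi(k;n))$. Let $\alpha=\limsup_{n\to\infty}\xi(k;n)^{n-1}$, and let $(n_p)_{p\in\mathbb N}$ be a strictly increasing sequence of integers $>k$ with $\alpha_p:=\xi(k;n_p)^{n_p-1}\to\alpha$ as $p\to\infty$. Then $\alpha=\lim_{p\to\infty}\alpha_p=0$.
   Context: For integers $k\ge2$, $n\ge1$ and $x\in\mathbb R$: $P_{n,k}(x)=\left(1+\frac{x^{n-1}}{2}\right)^{k+1}-\left(1-\frac{x^{n-1}}{2}\right)^{k+1}$, and for $n>k$: $Q_{n,k}(x)=(k+1)x^{n-k}$. (Solutions $\xi(k;n)\in(0,1)$ exist for every $n>k$.) *)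

From Stdlib Require Import Reals Lra Lia.
Open Scope R_scope.

Definition P (n k : nat) (x : R) : R :=
  (1 + x ^ (n - 1) / 2) ^ (k + 1) - (1 - x ^ (n - 1) / 2) ^ (k + 1).

Definition Q (n k : nat) (x : R) : R := INR (k + 1) * x ^ (n - k).

Definition is_limsup (u : nat -> R) (l : R) : Prop :=
  (forall eps, 0 < eps -> exists N, forall n, (N <= n)%nat -> u n < l + eps) /\
  (forall eps, 0 < eps -> forall N, exists n, (N <= n)%nat /\ l - eps < u n).

(* Write y = x^(n-1) for a root x in (0,1) of P_{n,k} = Q_{n,k}.  Expanding
   P_{n,k} binomially gives the lower bound (k+1) y + y^3/4 <= P_{n,k}(x), and
   since y = x^(n-k) x^(k-1), the equation P = Q turns this into the "gap"
   estimate  y^3 <= 4 (k+1) (1 - x^(k-1)).  Hence if y stays above some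
   a/2 > 0, then x^(k-1) stays below a fixed 1 - c < 1, and
   y = x^(n-1) <= (1-c)^((n-1)/(k-1)) tends to 0 as n grows, a contradiction. *)

From Stdlib Require Import Reals Lra Lia.
Open Scope R_scope.

Lemma pow_le_1 (t : R) (n : nat) : 0 <= t <= 1 -> t ^ n <= 1.
Proof. intros Ht. rewrite <- (pow1 n). apply pow_incr; lra. Qed.

Lemma pow_le_pow_of_le (t : R) (m n : nat) :
  0 <= t <= 1 -> (m <= n)%nat -> t ^ n <= t ^ m.
Proof.
  intros Ht Hmn. replace n with (m + (n - m))%nat by lia. rewrite pow_add.
  assert (0 <= t ^ m) by (apply pow_le; lra).
  pose proof (pow_le_1 t (n - m) Ht). nra.
Qed.

(* A bound on t^j transfers to t^m for every m >= j M: t^m <= (t^j)^M <= r^M. *)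
Lemma pow_le_of_root_bound (t r : R) (j M m : nat) :
  0 <= t <= 1 -> t ^ j <= r -> (j * M <= m)%nat -> t ^ m <= r ^ M.
Proof.
  intros Ht Hr HjM.
  apply Rle_trans with ((t ^ j) ^ M).
  - rewrite <- pow_mult. now apply pow_le_pow_of_le.
  - apply pow_incr. split; [apply pow_le; lra | exact Hr].
Qed.

(* Binomial estimates for h >= 0, proved simultaneously by induction on j:
   the odd part of (1+h)^(j+2) is at least its first two terms' worth, and the
   even part is at least 2 + 2h^2. *)
Lemma binomial_parts_lower_bound (h : R) (j : nat) : 0 <= h ->
  2 * INR (j + 2) * h + 2 * INR j * h ^ 3 <= (1 + h) ^ (j + 2) - (1 - h) ^ (j + 2)
  /\ 2 + 2 * h ^ 2 <= (1 + h) ^ (j + 2) + (1 - h) ^ (j + 2).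
Proof.
  intros Hh. induction j as [|j [IHodd IHeven]].
  - simpl. split; lra.
  - replace (S j + 2)%nat with (S (j + 2)) by lia.
    rewrite !S_INR, !plus_INR in *. simpl pow. simpl INR in *.
    set (A := (1 + h) ^ (j + 2)) in *. set (B := (1 - h) ^ (j + 2)) in *.
    (* (1+h)A -/+ (1-h)B = (A -/+ B) + h (A +/- B) *)
    assert (Eodd : (1 + h) * A - (1 - h) * B = (A - B) + h * (A + B)) by ring.
    assert (Eeven : (1 + h) * A + (1 - h) * B = (A + B) + h * (A - B)) by ring.
    rewrite Eodd, Eeven.
    assert (0 <= INR j) by apply pos_INR.
    assert (0 <= h ^ 3) by (apply pow_le; lra).
    assert (h * (2 + 2 * h ^ 2) <= h * (A + B)) by (apply Rmult_le_compat_l; lra).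
    assert (0 <= h * (A - B)) by (apply Rmult_le_pos; nra).
    simpl pow in *. split; lra.
Qed.

Lemma P_lower_bound (n k : nat) (x : R) : (2 <= k)%nat -> 0 <= x ^ (n - 1) ->
  INR (k + 1) * x ^ (n - 1) + (x ^ (n - 1)) ^ 3 / 4 <= P n k x.
Proof.
  intros Hk Hy. unfold P. set (y := x ^ (n - 1)) in *.
  destruct (binomial_parts_lower_bound (y / 2) (k - 1) ltac:(lra)) as [Hodd _].
  replace (k - 1 + 2)%nat with (k + 1)%nat in Hodd by lia.
  assert (Hj : 1 <= INR (k - 1)) by (apply (le_INR 1); lia).
  assert (0 <= (INR (k - 1) - 1) * y ^ 3) by (apply Rmult_le_pos; [lra | apply pow_le; lra]).
  replace ((y / 2) ^ 3) with (y ^ 3 / 8) in Hodd by field.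
  lra.
Qed.

(* Gap estimate: a root x in [0,1] of P = Q satisfies
   (x^(n-1))^3 <= 4 (k+1) (1 - x^(k-1)); writing y = z w with z = x^(n-k),
   w = x^(k-1), the lower bound gives y^3/4 <= (k+1) z (1 - w) <= (k+1)(1 - w). *)
Lemma root_gap (n k : nat) (x : R) : (2 <= k)%nat -> (k < n)%nat -> 0 <= x <= 1 ->
  P n k x = Q n k x -> (x ^ (n - 1)) ^ 3 <= 4 * INR (k + 1) * (1 - x ^ (k - 1)).
Proof.
  intros Hk Hn Hx Heq.
  pose proof (P_lower_bound n k x Hk ltac:(apply pow_le; lra)) as Hlow.
  rewrite Heq in Hlow. unfold Q in Hlow.
  assert (Hsplit : x ^ (n - 1) = x ^ (n - k) * x ^ (k - 1))
    by (rewrite <- pow_add; f_equal; lia).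
  assert (HK : 0 <= INR (k + 1)) by apply pos_INR.
  set (K := INR (k + 1)) in *. set (y := x ^ (n - 1)) in *.
  set (z := x ^ (n - k)) in *. set (w := x ^ (k - 1)) in *.
  assert (0 <= z <= 1) by (split; [apply pow_le; lra | apply pow_le_1; lra]).
  assert (w <= 1) by (apply pow_le_1; lra).
  assert (0 <= K * (1 - w) * (1 - z)) by (apply Rmult_le_pos; [apply Rmult_le_pos |]; lra).
  rewrite Hsplit in Hlow. nra.
Qed.

Lemma limit_nonneg (u : nat -> R) (a : R) :
  (forall p, 0 <= u p) -> Un_cv u a -> 0 <= a.
Proof.
  intros Hu Hcv. apply (Rle_cv_lim (Un := fun _ => 0) Hu); [| exact Hcv].
  intros eps Heps. exists 0%nat. intros p _. unfold Rdist.
  rewrite Rminus_diag, Rabs_R0. exact Heps.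
Qed.

(* Abstract form of the argument: if t_p in [0,1], m_p -> oo and the powers
   y_p = t_p^(m_p) obey the gap estimate y_p^3 <= C (1 - t_p^j), then y_p can
   only converge to 0.  Were the limit a > 0, eventually y_p > a/2, forcing
   t_p^j <= 1 - c with c = (a/2)^3 / C, hence y_p <= (1-c)^M for m_p >= j M,
   which is below a/2 for large M. *)
Lemma gap_power_limit_zero (j : nat) (C a : R) (t : nat -> R) (m : nat -> nat) :
  0 < C -> (forall p, 0 <= t p <= 1) -> (forall p, (p <= m p)%nat) ->
  (forall p, (t p ^ m p) ^ 3 <= C * (1 - t p ^ j)) ->
  Un_cv (fun p => t p ^ m p) a -> a = 0.
Proof.
  intros HC Ht Hm Hgap Hcv.
  assert (Ha0 : 0 <= a).
  { apply (limit_nonneg _ _ (fun p => pow_le _ _ (proj1 (Ht p))) Hcv). }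
  destruct (Rle_lt_or_eq_dec 0 a Ha0) as [Hpos | Hzero]; [exfalso | auto].
  destruct (Hcv (a / 2) ltac:(lra)) as [N Hnear].
  assert (Hbig : forall p, (N <= p)%nat -> a / 2 < t p ^ m p).
  { intros p Hp. specialize (Hnear p Hp). unfold Rdist in Hnear.
    apply Rabs_def2 in Hnear. lra. }
  set (c := (a / 2) ^ 3 / C).
  assert (Hc : 0 < c) by (apply Rdiv_lt_0_compat; [apply pow_lt |]; lra).
  assert (Hroot : forall p, (N <= p)%nat -> t p ^ j <= 1 - c).
  { intros p Hp. specialize (Hbig p Hp).
    assert ((a / 2) ^ 3 <= (t p ^ m p) ^ 3) by (apply pow_incr; lra).
    specialize (Hgap p).
    unfold c. apply (Rmult_le_reg_l C); [exact HC |].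
    replace (C * (1 - (a / 2) ^ 3 / C)) with (C - (a / 2) ^ 3) by (field; lra).
    lra. }
  assert (Hc1 : 0 <= 1 - c).
  { specialize (Hroot N (Nat.le_refl N)).
    assert (0 <= t N ^ j) by (apply pow_le, Ht). lra. }
  destruct (pow_lt_1_zero (1 - c) ltac:(rewrite Rabs_right; lra) (a / 2) ltac:(lra))
    as [M HM].
  specialize (HM M (Nat.le_refl M)). rewrite Rabs_right in HM by (apply Rle_ge, pow_le; lra).
  set (p := Nat.max N (j * M)).
  assert (Hp : t p ^ m p <= (1 - c) ^ M).
  { apply (pow_le_of_root_bound _ _ j); [apply Ht | apply Hroot; lia |].
    pose proof (Hm p). lia. }
  pose proof (Hbig p ltac:(lia)). lra.
Qed.

Lemma strictly_increasing_ge (f : nat -> nat) :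
  (forall p, (f p < f (S p))%nat) -> forall p, (p + f 0 <= f p)%nat.
Proof. intros Hinc p. induction p as [|p IH]; [lia |]. specialize (Hinc p). lia. Qed.

Theorem lemma5p4 (k : nat) (hk : (2 <= k)%nat) (xi : nat -> R)
  (hxi : forall n : nat, (k < n)%nat ->
           0 < xi n < 1 /\ P n k (xi n) = Q n k (xi n))
  (alpha : R)
  (halpha : is_limsup (fun n => xi n ^ (n - 1)) alpha)
  (np : nat -> nat)
  (hinc : forall p, (np p < np (S p))%nat)
  (hgt : forall p, (k < np p)%nat)
  (hconv : Un_cv (fun p => xi (np p) ^ (np p - 1)) alpha) :
  alpha = 0 /\ Un_cv (fun p => xi (np p) ^ (np p - 1)) 0.
Proof.
  assert (Hunit : forall p, 0 <= xi (np p) <= 1).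
  { intros p. destruct (hxi _ (hgt p)) as [Hx _]. lra. }
  assert (Hexp : forall p, (p <= np p - 1)%nat).
  { intros p. pose proof (strictly_increasing_ge np hinc p). pose proof (hgt 0%nat). lia. }
  assert (Hgap : forall p, (xi (np p) ^ (np p - 1)) ^ 3
                           <= 4 * INR (k + 1) * (1 - xi (np p) ^ (k - 1))).
  { intros p. apply root_gap; [exact hk | apply hgt | apply Hunit | apply hxi, hgt]. }
  assert (HC : 0 < 4 * INR (k + 1)) by (rewrite plus_INR; simpl; pose proof (pos_INR k); lra).
  assert (Halpha : alpha = 0)
    by exact (gap_power_limit_zero (k - 1) _ alpha (fun p => xi (np p)) (fun p => (np p - 1)%nat)
                HC Hunit Hexp Hgap hconv).
  split; [exact Halpha |]. rewrite <- Halpha. exact hconv.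
Qed.
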